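(* Let $(\mathfrak g,[\cdot,\cdot]_{\mathfrak g},E)$ be an ENL algebra. Then there exists a pre-ENL algebra $(\mathfrak g,\{\cdot,\cdot\},E)$ whose sub-adjacent ENL algebra is $(\mathfrak g,[\cdot,\cdot]_{\mathfrak g},E)$ (i.e. $\{x,y\}-\{y,x\}=[x,y]_{\mathfrak g}$) if and only if there exist an ENE-representation $(W;T,\rho)$ of $(\mathfrak g,[\cdot,\cdot]_{\mathfrak g},E)$ and an invertible ENE-relative Rota–Baxter operator $K:W\to\mathfrak g$ with respect to $(W;T,\rho)$. In this case, the product $\{x,y\}_K:=K(\rho(x)K^{-1}y)$ makes $(\mathfrak g,\{\cdot,\cdot\}_K,E)$ a pre-ENL algebra.
   Context: Vector spaces are finite-dimensional over an algebraically closed field of characteristic zero. An ENL algebra is a Lie algebra with linear $E$ satisfying $E[x,y]=[x,Ey]$ for all $x,y$. An ENE-representation $(W;T,\rho)$ of $(\mathfrak g,E)$ is a representation $\rho:\mathfrak g\to\mathfrak{gl}(W)$ with linear $T$ such that $T(\rho(x)u)=\rho(Ex)u=\rho(x)(Tu)$. An ENE-relative Rota–Baxter operator is a linear $K:W\to\mathfrak g$ with $[Ku,Kv]_{\mathfrak g}=K(\rho(Ku)v-\rho(Kv)u)$ for all $u,v\in W$ and $E\circ K=K\circ T$. A pre-Lie algebra is a vector space with bilinear product $\{\cdot,\cdot\}$ satisfying $\{\{x,y\},z\}-\{x,\{y,z\}\}=\{\{y,x\},z\}-\{y,\{x,z\}\}$; a pre-ENL algebra $(\mathfrak g,\{\cdot,\cdot\},E)$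 is a pre-Lie algebra with linear $E$ such that $E\{x,y\}=\{Ex,y\}=\{x,Ey\}$ for all $x,y$; its sub-adjacent ENL algebra is $(\mathfrak g,[\cdot,\cdot],E)$ with $[x,y]=\{x,y\}-\{y,x\}$. *)

From HB Require Import structures.
From mathcomp Require Import all_boot all_order all_algebra.
Set Implicit Arguments. Unset Strict Implicit. Unset Printing Implicit Defensive.
Import GRing.Theory.
Local Open Scope ring_scope.

Section ENL.
Variable F : fieldType.

Definition lin_map (U V : lmodType F) (f : U -> V) : Prop :=
  forall (a : F) (u v : U), f (a *: u + v) = a *: f u + f v.

Definition bilin (U V Z : lmodType F) (b : U -> V -> Z) : Prop :=
  (forall u, lin_map (b u)) /\ (forall v, lin_map (fun u => b u v)).

Definition is_lie (g : lmodType F) (br : g -> g -> g) : Prop :=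
  [/\ bilin br, (forall x, br x x = 0) &
      (forall x y z, br x (br y z) + br y (br z x) + br z (br x y) = 0)].

Definition is_ENL (g : lmodType F) (br : g -> g -> g) (E : g -> g) : Prop :=
  [/\ is_lie br, lin_map E & forall x y, E (br x y) = br x (E y)].

Definition is_rep (g W : lmodType F) (br : g -> g -> g) (rho : g -> W -> W) : Prop :=
  bilin rho /\
  forall x y u, rho (br x y) u = rho x (rho y u) - rho y (rho x u).

Definition is_ENE_rep (g W : lmodType F) (br : g -> g -> g) (E : g -> g)
  (T : W -> W) (rho : g -> W -> W) : Prop :=
  [/\ is_rep br rho, lin_map T &
      forall x u, T (rho x u) = rho (E x) u /\ rho (E x) u = rho x (T u)].

Definition is_ENE_RB (g W : lmodType F) (br : g -> g -> g) (E : g -> g)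
  (T : W -> W) (rho : g -> W -> W) (K : W -> g) : Prop :=
  [/\ lin_map K,
      (forall u v, br (K u) (K v) = K (rho (K u) v - rho (K v) u)) &
      (forall u, E (K u) = K (T u))].

Definition is_preLie (g : lmodType F) (pr : g -> g -> g) : Prop :=
  bilin pr /\
  forall x y z, pr (pr x y) z - pr x (pr y z) = pr (pr y x) z - pr y (pr x z).

Definition is_preENL (g : lmodType F) (pr : g -> g -> g) (E : g -> g) : Prop :=
  [/\ is_preLie pr, lin_map E &
      forall x y, E (pr x y) = pr (E x) y /\ pr (E x) y = pr x (E y)].

Definition subadjacent (g : lmodType F) (pr br : g -> g -> g) : Prop :=
  forall x y, pr x y - pr y x = br x y.

End ENL.

(** The left multiplications of a pre-ENL algebra form an ENE-representation
    of its sub-adjacent ENL algebra on the algebra itself: the pre-Lie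
    identity, read as [{[x,y],z} = {x,{y,z}} - {y,{x,z}}], says exactly that
    left multiplication is a representation, and the identity map is then an
    invertible ENE-relative Rota-Baxter operator.  Conversely, transporting an
    ENE-representation along an invertible operator [K] gives left
    multiplications [x |-> K rho(x) K^-1] of a product [{.,.}_K]; the
    Rota-Baxter identity says that its commutator is the bracket, so the same
    reading of the pre-Lie identity applies. *)
From mathcomp Require Import all_boot all_order all_algebra.
Set Implicit Arguments. Unset Strict Implicit. Unset Printing Implicit Defensive.
Import GRing.Theory.
Local Open Scope ring_scope.

Lemma subr_swap (V : zmodType) (a b c d : V) : a - b = c - d -> a - c = b - d.
Proof.
by move=> eq_ab_cd; rewrite -[a](subrK b) eq_ab_cd addrAC [c - d - c]addrAC subrr sub0r addrC.
Qed.

Section LinearMaps.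
Variable F : fieldType.
Implicit Types U V : lmodType F.

Lemma lin_mapB U V (f : U -> V) : lin_map f -> {morph f : u v / u - v}.
Proof.
move=> lin_f u v; have := lin_f (-1) v u.
by rewrite !scaleN1r [- v + u]addrC [- f v + f u]addrC.
Qed.

Lemma can_lin_map U V (f : U -> V) (f' : V -> U) :
  lin_map f -> cancel f f' -> cancel f' f -> lin_map f'.
Proof. by move=> lin_f fK f'K a x y; rewrite -{1}(f'K x) -{1}(f'K y) -lin_f fK. Qed.

End LinearMaps.

Section Transport.
Variables (F : fieldType) (g W V : lmodType F) (br : g -> g -> g).
Variables (rho : g -> W -> W) (K : W -> V) (Kinv : V -> W).
Hypotheses (lin_K : lin_map K) (KK : cancel K Kinv) (KinvK : cancel Kinv K).

Let rhoK x v := K (rho x (Kinv v)).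

Lemma bilin_conj : bilin rho -> bilin rhoK.
Proof.
have lin_Kinv := can_lin_map lin_K KK KinvK.
move=> [lin_rho_r lin_rho_l]; split=> [x a u v | v a x y]; rewrite /rhoK.
  by rewrite lin_Kinv lin_rho_r lin_K.
by rewrite lin_rho_l lin_K.
Qed.

Lemma is_rep_conj : is_rep br rho -> is_rep br rhoK.
Proof.
move=> [bilin_rho rho_br]; split; first exact: bilin_conj.
by move=> x y v; rewrite /rhoK !KK -lin_mapB // rho_br.
Qed.

End Transport.

Section PreLie.
Variables (F : fieldType) (g : lmodType F) (pr br : g -> g -> g).
Hypotheses (bilin_pr : bilin pr) (pr_br : subadjacent pr br).

Lemma preLie_left_mul_rep : is_preLie pr <-> is_rep br pr.
Proof.
have pr_brz x y z : pr (br x y) z = pr (pr x y) z - pr (pr y x) z.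
  by rewrite -pr_br (lin_mapB (bilin_pr.2 z)).
split=> [[_ assoc_sym] | [_ rep]]; split=> // x y z.
  by rewrite pr_brz; apply: subr_swap.
by apply: subr_swap; rewrite -pr_brz rep.
Qed.

End PreLie.

Section PreENL.
Variables (F : fieldType) (g : lmodType F) (pr br : g -> g -> g) (E : g -> g).
Hypotheses (preENL_pr : is_preENL pr E) (pr_br : subadjacent pr br).

Lemma preENL_ENE_rep : is_ENE_rep br E E pr.
Proof.
have [preLie_pr lin_E E_pr] := preENL_pr.
by split=> //; apply/(preLie_left_mul_rep preLie_pr.1 pr_br).
Qed.

Lemma preENL_id_ENE_RB : is_ENE_RB br E E pr id.
Proof. by split=> // [a u v | u v]; rewrite pr_br. Qed.

End PreENL.

Section RotaBaxter.
Variables (F : fieldType) (g W : lmodType F) (br : g -> g -> g) (E : g -> g).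
Variables (T : W -> W) (rho : g -> W -> W) (K : W -> g) (Kinv : g -> W).
Hypotheses (rep : is_ENE_rep br E T rho) (RB : is_ENE_RB br E T rho K).
Hypotheses (KK : cancel K Kinv) (KinvK : cancel Kinv K).

Let prK x y := K (rho x (Kinv y)).

Lemma RB_subadjacent : subadjacent prK br.
Proof.
have [lin_K K_br _] := RB.
move=> x y; rewrite /prK -[in br x y](KinvK x) -[in br _ y](KinvK y).
by rewrite K_br !KinvK lin_mapB.
Qed.

Lemma RB_inv_comm y : Kinv (E y) = T (Kinv y).
Proof. by have [_ _ E_K] := RB; rewrite -{1}(KinvK y) E_K KK. Qed.

Lemma RB_preENL : is_preENL prK E /\ subadjacent prK br.
Proof.
split; last exact: RB_subadjacent.
have [[rep_rho lin_T T_rho] [lin_K _ E_K]] := (rep, RB).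
have bilin_prK : bilin prK := bilin_conj lin_K KK KinvK rep_rho.1.
split.
- apply/(preLie_left_mul_rep bilin_prK RB_subadjacent).
  exact: is_rep_conj lin_K KK KinvK rep_rho.
- have lin_Kinv := can_lin_map lin_K KK KinvK.
  have E_conj y : E y = K (T (Kinv y)) by rewrite -RB_inv_comm KinvK.
  by move=> a u v; rewrite !E_conj lin_Kinv lin_T lin_K.
move=> x y; rewrite /prK E_K RB_inv_comm.
by have [-> ->] := T_rho x (Kinv y).
Qed.

End RotaBaxter.

Theorem proposition7p7 (F : closedFieldType) (hF : [pchar F] =i pred0)
  (g : vectType F) (br : g -> g -> g) (E : g -> g) :
  is_ENL br E ->
  ((exists pr : g -> g -> g, is_preENL pr E /\ subadjacent pr br) <->
   (exists (W : vectType F) (T : W -> W) (rho : g -> W -> W) (K : W -> g),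
       is_ENE_rep br E T rho /\ is_ENE_RB br E T rho K /\ bijective K))
  /\
  (forall (W : vectType F) (T : W -> W) (rho : g -> W -> W) (K : W -> g)
          (Kinv : g -> W),
     is_ENE_rep br E T rho -> is_ENE_RB br E T rho K ->
     cancel K Kinv -> cancel Kinv K ->
     is_preENL (fun x y => K (rho x (Kinv y))) E /\
     subadjacent (fun x y => K (rho x (Kinv y))) br).
Proof.
move=> _; split; last by move=> W T rho K Kinv; apply: RB_preENL.
split=> [[pr [preENL_pr pr_br]] | [W [T [rho [K [rep [RB [Kinv KK KinvK]]]]]]]].
- exists g, E, pr, id.
  split; first exact: preENL_ENE_rep.
  by split; [exact: preENL_id_ENE_RB | exists id].
- by exists (fun x y => K (rho x (Kinv y))); apply: RB_preENL rep RB KK KinvK.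
Qed.
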